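(* Let $U,X,Y$ be Banach spaces and let $S$ be a $(U,X,Y)$-relation. If $S=\operatorname{Sys}(A,B,C)=\operatorname{Sys}(A',B',C')$, where $A$ and $A'$ generate strongly continuous semigroups on $X$, $B,B':U\to X$ are bounded, and $C:\operatorname{Dom}(A)\to Y$, $C':\operatorname{Dom}(A')\to Y$ are bounded for the respective graph norms, then $A=A'$ (including equality of domains), $B=B'$ and $C=C'$.
   Context: For Banach spaces $U,X,Y$, a $(U,X,Y)$-relation is any subset of $C^0(\mathbb{R}_{\ge 0},U)\times C^0(\mathbb{R}_{\ge 0},X)\times C^0(\mathbb{R}_{\ge 0},Y)$; its elements $(u,x,y)$ are called input, state and output. If $A$ generates a strongly continuous semigroup $(e^{At})_{t\ge0}$ on $X$, $B:U\to X$ is bounded and $C:\operatorname{Dom}(A)\to Y$ is bounded for the graph norm of $A$, then $\operatorname{Sys}(A,B,C)$ denotes the $(U,X,Y)$-relation consisting of all $(u,x,y)$ with $u\in C^0(\mathbb{R}_{\ge0},U)$, $x\in C^0(\mathbb{R}_{\ge0},\operatorname{Dom}(A))\cap C^1(\mathbb{R}_{\ge0},X)$, $y\in C^0(\mathbb{R}_{\ge0},Y)$ satisfying $\dot x(t)=Ax(t)+Bu(t)$ and $y(t)=Cx(t)$ for all $t\ge0$. *)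

From HB Require Import structures.
From mathcomp Require Import all_boot all_order all_algebra.
From mathcomp Require Import all_classical all_reals all_analysis.
Set Implicit Arguments. Unset Strict Implicit. Unset Printing Implicit Defensive.
Import Order.TTheory GRing.Theory Num.Theory.
Import numFieldNormedType.Exports.
Local Open Scope classical_set_scope.
Local Open Scope ring_scope.

Section Defs.
Variable R : realType.

Definition Rge0 : set R := [set t : R | 0 <= t].

Definition bounded_linear (V W : normedModType R) (f : V -> W) : Prop :=
  (forall (a : R) (u v : V), f (a *: u + v) = a *: f u + f v) /\
  exists M : R, forall u, `|f u| <= M * `|u|.

(* strongly continuous semigroup, indexed by t >= 0 (values at t < 0 unused) *)
Definition C0_semigroup (X : normedModType R) (T : R -> X -> X) : Prop :=
  (forall t, 0 <= t -> bounded_linear (T t)) /\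
  (forall x, T 0 x = x) /\
  (forall s t x, 0 <= s -> 0 <= t -> T (s + t) x = T s (T t x)) /\
  (forall x, {within Rge0, continuous (fun t => T t x)}).

Definition is_generator_of (X : normedModType R) (T : R -> X -> X)
    (D : set X) (A : X -> X) : Prop :=
  (forall x, D x <-> exists y : X,
      (fun h : R => h^-1 *: (T h x - x)) @ 0^'+ --> y) /\
  (forall x, D x -> (fun h : R => h^-1 *: (T h x - x)) @ 0^'+ --> A x).

Definition generates_C0 (X : normedModType R) (D : set X) (A : X -> X) : Prop :=
  exists T : R -> X -> X, C0_semigroup T /\ is_generator_of T D A.

Definition graph_bounded (X Y : normedModType R) (D : set X) (A : X -> X)
    (C : X -> Y) : Prop :=
  (forall (a : R) (x z : X), D x -> D z -> C (a *: x + z) = a *: C x + C z) /\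
  exists M : R, forall x, D x -> `|C x| <= M * (`|x| + `|A x|).

Definition has_deriv_Rge0 (X : normedModType R) (x : R -> X) (t : R) (d : X) : Prop :=
  (fun h : R => h^-1 *: (x (t + h) - x t))
    @ within (fun h : R => 0 <= t + h) (0 : R)^' --> d.

Definition C1_Rge0 (X : normedModType R) (x dx : R -> X) : Prop :=
  (forall t, 0 <= t -> has_deriv_Rge0 x t (dx t)) /\
  {within Rge0, continuous dx}.

(* A (U,X,Y)-relation: functions on R are only considered on t >= 0 *)
Definition relation (U X Y : normedModType R) :=
  set ((R -> U) * (R -> X) * (R -> Y)).

Definition Sys (U X Y : normedModType R) (D : set X) (A : X -> X)
    (B : U -> X) (C : X -> Y) : relation U X Y :=
  [set uxy | let: (u, x, y) := uxy in
    {within Rge0, continuous u} /\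
    (* x in C^0(R_{>=0}, Dom(A)) for the graph norm *)
    (forall t, 0 <= t -> D (x t)) /\
    {within Rge0, continuous x} /\
    {within Rge0, continuous (fun t => A (x t))} /\
    (exists dx : R -> X, C1_Rge0 x dx /\
       forall t, 0 <= t -> dx t = A (x t) + B (u t)) /\
    {within Rge0, continuous y} /\
    (forall t, 0 <= t -> y t = C (x t))].

End Defs.

(* Given x0 in Dom(A) and u0 in U, put w := A x0 + B u0 and
   x(t) := x0 + \int_0^t e^{sA} w ds.  Then x(t) lies in Dom(A) with
   A x(t) = e^{tA} w - B u0, so (u0, x, C x) is a trajectory of Sys(A,B,C)
   with x(0) = x0 and x'(0) = A x0 + B u0.  As a trajectory of Sys(A',B',C')
   it gives x0 in Dom(A'), A x0 + B u0 = A' x0 + B' u0 and C x0 = C' x0;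
   u0 = 0 and then x0 = 0 separate A from B.
   The vector-valued integral is built as a limit of Riemann sums, which
   converge because X is complete and the integrand is uniformly continuous
   on compact intervals. *)

From HB Require Import structures.
From mathcomp Require Import all_boot all_order all_algebra.
From mathcomp Require Import all_classical all_reals all_analysis.
From mathcomp Require Import lra ring.
Import Order.TTheory GRing.Theory Num.Theory Num.Def.
Import numFieldNormedType.Exports.
Local Open Scope classical_set_scope.
Local Open Scope ring_scope.
Set Implicit Arguments. Unset Strict Implicit. Unset Printing Implicit Defensive.

Section BoundedLinear.
Variables (R : realType) (V W : normedModType R) (g : V -> W).
Hypothesis hg : bounded_linear g.

Lemma bounded_linear0 : g 0 = 0.
Proof.
have := hg.1 1 0 0; rewrite !scale1r addr0 => g0.
by apply: (addrI (g 0)); rewrite addr0 -g0.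
Qed.

Lemma bounded_linearD u v : g (u + v) = g u + g v.
Proof. by have := hg.1 1 u v; rewrite !scale1r. Qed.

Lemma bounded_linearZ a u : g (a *: u) = a *: g u.
Proof. by have := hg.1 a u 0; rewrite !addr0 bounded_linear0 addr0. Qed.

Lemma bounded_linearB u v : g (u - v) = g u - g v.
Proof. by rewrite bounded_linearD -scaleN1r bounded_linearZ scaleN1r. Qed.

Lemma bounded_linear_norm_le : exists2 M, 0 < M & forall u, `|g u| <= M * `|u|.
Proof.
case: hg => _ [M gM]; exists (`|M| + 1) => [|u]; first by rewrite ltr_wpDl.
apply: le_trans (gM u) _; apply: ler_wpM2r => //.
by rewrite (le_trans (ler_norm M)) // lerDl.
Qed.

End BoundedLinear.

Section ContinuityOnRge0.
Variables (R : realType) (X : normedModType R).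

Lemma continuous_Rge0P (g : R -> X) :
  {within @Rge0 R, continuous g} <->
  (forall t, 0 <= t -> forall e, 0 < e -> exists2 r, 0 < r &
     forall s, 0 <= s -> `|s - t| < r -> `|g s - g t| <= e).
Proof.
rewrite subspace_continuousP; split => [gc t t0 e e0|gc t t0].
  have /cvgrPdist_le /(_ e e0) /nbhs_ballP[r r0 gr] := gc t t0.
  exists r => // s s0 st; rewrite distrC; apply: gr => //.
  by rewrite /ball /= distrC.
apply/cvgrPdist_le => e e0; have [r r0 gr] := gc t t0 e e0.
apply/nbhs_ballP; exists r => // s /= ts s0.
by rewrite distrC; apply: gr => //; rewrite distrC.
Qed.

Definition uniform_modulus (f : R -> X) (L e d : R) := forall s s', 0 <= s -> s <= L ->
  0 <= s' -> s' <= L -> `|s - s'| <= d -> `|f s - f s'| <= e.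

Lemma continuous_Rge0_uniform (f : R -> X) : {within @Rge0 R, continuous f} ->
  forall L e, 0 < e -> exists2 d, 0 < d & uniform_modulus f L e d.
Proof.
move=> /continuous_Rge0P fc L e e0.
pose close d x' := forall s, `[0, L]%classic s -> `|s - x'| <= d -> `|f s - f x'| <= e.
(* Heine-Cantor, via the near-covering characterisation of the compactness of [0, L]. *)
have : \forall d \near 0^'+, `[0, L]%classic `<=` close d.
  have := (near_covering_withinP _).2
    ((compact_near_coveringP _).1 (@segment_compact _ 0 L)).
  apply => x; rewrite /= in_itv /= => /andP[x0 _].
  have e20 : 0 < e / 2 by rewrite divr_gt0.
  have [r r0 fr] := fc x x0 _ e20.
  have r20 : 0 < r / 2 by rewrite divr_gt0.
  exists ([set x' | `|x' - x| < r / 2], [set d | 0 < d < r / 2]); first split.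
  - by apply/nbhs_ballP; exists (r / 2) => // y; rewrite /ball /= distrC.
  - near=> d; apply/andP; split; first by [].
    by near: d; apply: nbhs_right_lt.
  move=> [x' d] [/= x'x /andP[d0 dr]] + s + sx'.
  rewrite /= !in_itv /= => /andP[x'0 _] /andP[s0 _].
  have fx' : `|f x' - f x| <= e / 2.
    by apply: fr => //; rewrite (lt_trans x'x) // ltr_pdivrMr // ltr_pMr // ltr1n.
  have fs : `|f s - f x| <= e / 2.
    apply: fr => //; rewrite (le_lt_trans (ler_distD x' _ _)) //.
    by rewrite [r in _ < r](splitr r) addrC ltr_leD // (le_trans sx') // ltW.
  rewrite (le_trans (ler_distD (f x) _ _)) // [e in _ <= e](splitr e) lerD //.
  by rewrite distrC.
move=> close_near.
have [d d0 dclose] : exists2 d : R, 0 < d & `[0, L]%classic `<=` close d.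
  near (0:R)^'+ => d; exists d; near: d; [exact: nbhs_right_gt | exact: close_near].
exists d => // s s' s0 sL s'0 s'L; apply: (dclose s').
  by rewrite /= in_itv /= s'0 s'L.
by rewrite /= in_itv /= s0 sL.
Unshelve. all: by end_near.
Qed.

End ContinuityOnRge0.

Section Partitions.
Variable R : realType.

Lemma truncn_mul_bounds (N x : R) : 0 < N -> 0 <= x ->
  (truncn (N * x))%:R / N <= x /\ x < (truncn (N * x))%:R / N + N^-1.
Proof.
move=> N0 x0; have /andP[lb ub] := truncn_itv (mulr_ge0 (ltW N0) x0).
split; first by rewrite ler_pdivrMr // [x * N]mulrC.
by rewrite -[X in _ < _ + X]mul1r -mulrDl ltr_pdivlMr // [x * N]mulrC natr1.
Qed.

Lemma uniform_partition (t d : R) : 0 <= t -> 0 < d ->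
  exists K : nat, exists2 h : R, 0 <= h <= d & K%:R * h = t.
Proof.
move=> t0 d0; set K := (truncn (t / d)).+1.
have K0 : 0 < K%:R :> R by rewrite ltr0n.
exists K, (t / K%:R); last by rewrite mulrC divfK // gt_eqF.
rewrite divr_ge0 ?ler0n //= ler_pdivrMr // mulrC -ler_pdivrMr // ltW //.
exact: truncnS_gt.
Qed.

Lemma grid_step (h : R) (i K : nat) : 0 <= h -> (i < K)%N ->
  [/\ 0 <= i%:R * h, i.+1%:R * h <= K%:R * h & i.+1%:R * h - i%:R * h = h].
Proof.
move=> h0 iK; split; first exact: mulr_ge0.
  by rewrite ler_wpM2r // ler_nat.
by rewrite -mulrBl -natrB // subSnn mul1r.
Qed.

Lemma near_oo_divn_le (c r : R) : 0 < r -> \forall n \near \oo, c / n%:R <= r.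
Proof.
move=> r0; exists (truncn (c / r)).+1 => // n /= cn.
have n0 : 0 < n%:R :> R by rewrite ltr0n (leq_trans _ cn).
rewrite ler_pdivrMr // mulrC -ler_pdivrMr // ltW //.
by rewrite (lt_le_trans (truncnS_gt _)) // ler_nat.
Qed.

End Partitions.

Section Increments.
Variables (R : realType) (X : normedModType R).

Lemma small_increments_const (G : R -> X) (t : R) : 0 <= t ->
  (forall e, 0 < e -> exists2 d, 0 < d & forall s s', 0 <= s -> s <= s' -> s' <= t ->
     s' - s <= d -> `|G s' - G s| <= (s' - s) * e) -> G t = G 0.
Proof.
move=> t0 Gflat; apply/eqP; rewrite -subr_eq0 -normr_le0.
apply/ler_addgt0Pr => e e0; rewrite add0r.
have t10 : 0 < t + 1 by rewrite ltr_wpDl.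
have [d d0 Gd] := Gflat _ (divr_gt0 e0 t10).
have [K [h /andP[h0 hd] tK]] := uniform_partition t0 d0.
have -> : G t - G 0 = \sum_(0 <= i < K) (G (i.+1%:R * h) - G (i%:R * h)).
  by rewrite telescope_sumr // mul0r tK.
apply: le_trans (ler_norm_sum _ _ _) _.
apply: le_trans (ler_sum_nat (G := fun=> h * (e / (t + 1))) _) _.
  move=> i /andP[_ iK]; have [i0 i1K dh] := grid_step h0 iK.
  rewrite -[in X in _ <= X * _]dh Gd // ?dh -?tK //.
  by rewrite -subr_ge0 dh.
rewrite sumr_const_nat subn0 -mulr_natl mulrA tK mulrA ler_pdivrMr //; lra.
Qed.

Lemma cvg_norm_le (u : nat -> X) (l : X) (c : R) : u @ \oo --> l ->
  (forall eta, 0 < eta -> \forall n \near \oo, `|u n| <= c + eta) -> `|l| <= c.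
Proof.
move=> ul ub; apply/ler_addgt0Pr => eta eta0.
exact: ler_cvg_to (cvg_norm ul) (cvg_cst _) (ub _ eta0).
Qed.

End Increments.

Section RiemannSums.
Variables (R : realType) (X : normedModType R) (f : R -> X).

Definition riemann_sum (n : nat) (t : R) : X :=
  n%:R^-1 *: \sum_(0 <= j < truncn (n%:R * t)) f (j%:R / n%:R).

Lemma riemann_sum0 n : riemann_sum n 0 = 0.
Proof. by rewrite /riemann_sum mulr0 truncn0 big_geq // scaler0. Qed.

Lemma riemann_sum_increment_le L e d : uniform_modulus f L e d ->
  forall n, (0 < n)%N -> n%:R^-1 <= d ->
  forall s t, 0 <= s -> s <= t -> t <= L -> t - s <= d ->
  `|riemann_sum n t - riemann_sum n s - (t - s) *: f s|
    <= (t - s + n%:R^-1) * e + `|f s| * n%:R^-1.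
Proof.
move=> fd n n0 nd s t s0 st tL tsd.
set N := n%:R; have N0 : 0 < N by rewrite ltr0n.
have iN0 : 0 < N^-1 by rewrite invr_gt0.
set a := truncn (N * s); set b := truncn (N * t).
have [a_s s_a] := truncn_mul_bounds N0 s0.
have [b_t t_b] := truncn_mul_bounds N0 (le_trans s0 st).
have ab : (a <= b)%N by apply: le_truncn; rewrite ler_pM2l.
have ba : N^-1 * (b - a)%:R = b%:R / N - a%:R / N.
  by rewrite natrB // mulrBr !(mulrC N^-1).
have e0 : 0 <= e.
  apply: le_trans (fd s s s0 (le_trans st tL) s0 (le_trans st tL) _); first by [].
  by rewrite subrr normr0 (le_trans (ltW iN0)).
have fj_near_fs j : (a <= j < b)%N -> `|f (j%:R / N) - f s| <= e.
  move=> /andP[aj jb].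
  have ja : a%:R / N <= j%:R / N by rewrite ler_pM2r // ler_nat.
  have jb' : j%:R / N + N^-1 <= b%:R / N.
    by rewrite -[X in _ + X]mul1r -mulrDl ler_pM2r // natr1 ler_nat.
  apply: fd; [exact: divr_ge0 | lra | by [] | lra | rewrite ler_norml; apply/andP; split; lra].
have -> : riemann_sum n t - riemann_sum n s - (t - s) *: f s =
    N^-1 *: \sum_(a <= j < b) (f (j%:R / N) - f s) + (N^-1 * (b - a)%:R - (t - s)) *: f s.
  rewrite /riemann_sum -/N -/a -/b (@big_cat_nat _ _ _ a) //= scalerDr.
  rewrite [X in X - _ *: _]addrAC subrr add0r.
  rewrite sumrB sumr_const_nat -scaler_nat scalerBr scalerA.
  by rewrite [X in _ = _ + X]scalerBl addrA subrK.
apply: le_trans (ler_normD _ _) _; rewrite !normrZ (gtr0_norm iN0) ba.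
apply: lerD; last by rewrite mulrC ler_wpM2l // ler_norml; apply/andP; split; lra.
have sum_le : `|\sum_(a <= j < b) (f (j%:R / N) - f s)| <= (b - a)%:R * e.
  apply: le_trans (ler_norm_sum _ _ _) _.
  by apply: le_trans (ler_sum_nat fj_near_fs) _; rewrite sumr_const_nat mulr_natl.
apply: le_trans (ler_wpM2l (ltW iN0) sum_le) _.
by rewrite mulrA ba ler_wpM2r //; lra.
Qed.

Lemma riemann_sum_grid_le L e d n K h : uniform_modulus f L e d ->
  (0 < n)%N -> n%:R^-1 <= d -> 0 <= h -> h <= d -> K%:R * h <= L ->
  `|riemann_sum n (K%:R * h) - \sum_(0 <= i < K) h *: f (i%:R * h)|
    <= K%:R * h * e + (K%:R * e + \sum_(0 <= i < K) `|f (i%:R * h)|) / n%:R.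
Proof.
move=> fd n0 nd h0 hd KhL.
have -> : riemann_sum n (K%:R * h) =
    \sum_(0 <= i < K) (riemann_sum n (i.+1%:R * h) - riemann_sum n (i%:R * h)).
  by rewrite telescope_sumr // mul0r riemann_sum0 subr0.
rewrite -sumrB; apply: le_trans (ler_norm_sum _ _ _) _.
apply: le_trans (ler_sum_nat
  (G := fun i => (h + n%:R^-1) * e + `|f (i%:R * h)| * n%:R^-1) _) _.
  move=> i /andP[_ iK]; have [i0 i1K dh] := grid_step h0 iK.
  have := riemann_sum_increment_le fd n0 nd i0 _ (le_trans i1K KhL); rewrite dh.
  by apply; rewrite // -subr_ge0 dh.
rewrite big_split /= sumr_const_nat subn0 -big_distrl /= -mulr_natl; lra.
Qed.

End RiemannSums.

Section DerivativeOnRge0.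
Variables (R : realType) (X : normedModType R).

Lemma has_deriv_Rge0_right (x : R -> X) t d : 0 <= t -> has_deriv_Rge0 x t d ->
  (fun h : R => h^-1 *: (x (t + h) - x t)) @ 0^'+ --> d.
Proof.
move=> t0; apply: cvg_trans; apply: cvg_app => Q Q0.
have {}Q0 : nbhs (0 : R) (fun h => h != 0 -> 0 <= t + h -> Q h) := Q0.
change (nbhs (0 : R) (fun h => 0 < h -> Q h)).
by apply: filterS Q0 => h Qh h0; apply: Qh; rewrite ?gt_eqF // addr_ge0 // ltW.
Qed.

Lemma has_deriv_Rge0_unique (x : R -> X) t d d' : 0 <= t ->
  has_deriv_Rge0 x t d -> has_deriv_Rge0 x t d' -> d = d'.
Proof.
by move=> t0 /(has_deriv_Rge0_right t0) xd /(has_deriv_Rge0_right t0); apply: cvg_unique.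
Qed.

Lemma has_deriv_Rge0_continuous (x dx : R -> X) :
  (forall t, 0 <= t -> has_deriv_Rge0 x t (dx t)) -> {within @Rge0 R, continuous x}.
Proof.
move=> xd; apply/continuous_Rge0P => t t0 e e0.
have /cvgrPdist_le /(_ 1 ltr01) := xd t t0.
rewrite /within /= => /nbhs_ballP[r r0 xr].
have M0 : 0 < `|dx t| + 1 by rewrite ltr_wpDl.
exists (Num.min r (e / (`|dx t| + 1))) => [|s s0]; first by rewrite lt_min r0 divr_gt0.
rewrite lt_min => /andP[sr se].
have [->|st] := eqVneq s t; first by rewrite subrr normr0 ltW.
have st0 : s - t != 0 by rewrite subr_eq0.
have := xr (s - t); rewrite /ball /= sub0r normrN subrKC => /(_ sr st0 s0) q1.
have qM : `|(s - t)^-1 *: (x s - x t)| <= `|dx t| + 1.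
  by have := ler_distD (dx t) ((s - t)^-1 *: (x s - x t)) 0; rewrite !subr0 distrC; lra.
rewrite -(scalerKV st0 (x s - x t)) normrZ.
apply: le_trans (ler_pM _ _ (ltW se) qM) _ => //.
by rewrite divfK ?gt_eqF.
Qed.

End DerivativeOnRge0.

Section Primitive.
Variables (R : realType) (X : completeNormedModType R) (f : R -> X).
Hypothesis fc : {within @Rge0 R, continuous f}.

Lemma riemann_sum_cvg t : 0 <= t -> cvg (riemann_sum f ^~ t @ \oo).
Proof.
move=> t0; apply/cauchy_cvgP/cauchy_exP => e e0.
have t1 : 0 < t + 1 by rewrite ltr_wpDl.
set eps := e / 2 / (t + 1).
have eps0 : 0 < eps by rewrite !divr_gt0.
have [d d0 fd] := continuous_Rge0_uniform fc t eps0.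
have [K [h /andP[h0 hd] tK]] := uniform_partition t0 d0.
set c := \sum_(0 <= i < K) h *: f (i%:R * h).
exists c; change (\forall n \near \oo, ball c e (riemann_sum f n t)); near=> n.
have n0 : (0 < n)%N by near: n; exact: nbhs_infty_gt.
have nd : n%:R^-1 <= d by rewrite -div1r; near: n; exact: near_oo_divn_le.
have nS : (K%:R * eps + \sum_(0 <= i < K) `|f (i%:R * h)|) / n%:R <= eps.
  by near: n; exact: near_oo_divn_le.
have Kht : K%:R * h <= t by rewrite tK.
have := riemann_sum_grid_le fd n0 nd h0 hd Kht; rewrite tK -/c distrC -ball_normE /ball_ /=.
have : (t + 1) * eps = e / 2 by rewrite /eps mulrC divfK ?gt_eqF.
lra.
Unshelve. all: by end_near.
Qed.

Definition primitive (t : R) : X := lim (riemann_sum f ^~ t @ \oo).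

Lemma primitive0 : primitive 0 = 0.
Proof.
rewrite /primitive (_ : riemann_sum f ^~ 0 = fun=> 0) ?lim_cst //.
by apply/funext => n; exact: riemann_sum0.
Qed.

Lemma primitive_increment_le L e d : 0 < e -> 0 < d -> uniform_modulus f L e d ->
  forall s t, 0 <= s -> s <= t -> t <= L -> t - s <= d ->
  `|primitive t - primitive s - (t - s) *: f s| <= (t - s) * e.
Proof.
move=> e0 d0 fd s t s0 st tL tsd.
apply: (cvg_norm_le (u := fun n => riemann_sum f n t - riemann_sum f n s - (t - s) *: f s)).
  apply: cvgB; last exact: cvg_cst.
  by apply: cvgB; apply: riemann_sum_cvg => //; apply: le_trans st.
move=> eta eta0; near=> n.
have n0 : (0 < n)%N by near: n; exact: nbhs_infty_gt.
have nd : n%:R^-1 <= d by rewrite -div1r; near: n; exact: near_oo_divn_le.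
have ne : (e + `|f s|) / n%:R <= eta by near: n; exact: near_oo_divn_le.
have := riemann_sum_increment_le fd n0 nd s0 st tL tsd.
lra.
Unshelve. all: by end_near.
Qed.

Lemma primitive_deriv t : 0 <= t -> has_deriv_Rge0 primitive t (f t).
Proof.
move=> t0; apply/cvgrPdist_le => e e0.
have e20 : 0 < e / 2 by rewrite divr_gt0.
have [d d0 fd] := continuous_Rge0_uniform fc (t + 1) e20.
have quotient_le a b : 0 <= a -> a < b -> b <= t + 1 -> b - a <= d ->
    `|f t - f a| <= e / 2 -> `|f t - (b - a)^-1 *: (primitive b - primitive a)| <= e.
  move=> a0 ab b1 bad fta; have ba0 : 0 < b - a by rewrite subr_gt0.
  have incr := primitive_increment_le e20 d0 fd a0 (ltW ab) b1 bad.
  have -> : f t - (b - a)^-1 *: (primitive b - primitive a) =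
      (f t - f a) - (b - a)^-1 *: (primitive b - primitive a - (b - a) *: f a).
    by rewrite [in RHS]scalerBr scalerA mulVf ?gt_eqF // scale1r opprB addrA subrK.
  apply: le_trans (ler_normB _ _) _.
  rewrite normrZ gtr0_norm ?invr_gt0 // [e](splitr e) lerD // mulrC ler_pdivrMr //.
  by rewrite mulrC.
rewrite /within /=; apply/nbhs_ballP; exists (Num.min d 1) => [|h].
  by rewrite /= lt_min d0 ltr01.
rewrite /ball /= sub0r normrN lt_min !ltr_norml.
move=> /andP[/andP[hd hd'] /andP[h1 h1']] h_neq0 th.
have [hpos|hneg] := ltP 0 h.
  have := quotient_le t (t + h) t0; rewrite (_ : t + h - t = h); last by ring.
  by apply; rewrite ?subrr ?normr0 ?ltW //; lra.
have := quotient_le (t + h) t th; rewrite (_ : t - (t + h) = - h); last by ring.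
rewrite invrN scaleNr -scalerN opprB; apply; try lra.
apply: fd; rewrite // ?ler_norml; lra.
Unshelve. all: by end_near.
Qed.

End Primitive.

Lemma bounded_linear_primitive (R : realType) (X Y : completeNormedModType R)
    (L : X -> Y) (f : R -> X) (g : R -> Y) (h : R) :
  bounded_linear L -> {within @Rge0 R, continuous f} -> {within @Rge0 R, continuous g} ->
  0 <= h -> (forall s, 0 <= s -> L (f s) = g (s + h)) ->
  forall t, 0 <= t -> L (primitive f t) = primitive g (t + h) - primitive g h.
Proof.
move=> hL fc gc h0 Lfg t t0.
pose G s := L (primitive f s) - primitive g (s + h).
suff : G t = G 0.
  rewrite /G primitive0 (bounded_linear0 hL) !add0r => /eqP.
  by rewrite subr_eq addrC => /eqP.
apply: small_increments_const t0 _ => e e0.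
have [M M0 LM] := bounded_linear_norm_le hL.
have M10 : 0 < M + 1 by rewrite ltr_wpDl // ltW.
set eps := e / (M + 1); have eps0 : 0 < eps by rewrite divr_gt0.
have [df df0 fdf] := continuous_Rge0_uniform fc t eps0.
have [dg dg0 gdg] := continuous_Rge0_uniform gc (t + h) eps0.
exists (Num.min df dg) => [|s s' s0 ss' s't]; first by rewrite lt_min df0.
rewrite le_min => /andP[sdf sdg]; set c := s' - s.
have incr_f := primitive_increment_le fc eps0 df0 fdf s0 ss' s't sdf; rewrite -/c in incr_f.
have incr_g : `|primitive g (s' + h) - primitive g (s + h) - c *: g (s + h)| <= c * eps.
  have := primitive_increment_le gc eps0 dg0 gdg (addr_ge0 s0 h0) (s := s + h) (t := s' + h).
  have -> : s' + h - (s + h) = c by rewrite [s + h]addrC addrKA.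
  by apply; rewrite // lerD2r.
have -> : G s' - G s = L (primitive f s' - primitive f s - c *: f s)
    - (primitive g (s' + h) - primitive g (s + h) - c *: g (s + h)).
  rewrite /G !(bounded_linearB hL) (bounded_linearZ hL) Lfg //.
  rewrite [in RHS]opprB [in RHS]addrA subrK !opprB addrACA [RHS]addrACA.
  by rewrite [- primitive g _ + _]addrC.
apply: le_trans (ler_normB _ _) _; apply: le_trans (lerD (LM _) (lexx _)) _.
have ce : (M + 1) * (c * eps) = c * e.
  by rewrite mulrCA [(M + 1) * _]mulrC divfK ?gt_eqF.
have := ler_wpM2l (ltW M0) incr_f; lra.
Qed.

Section Semigroup.
Variables (R : realType) (X : completeNormedModType R) (T : R -> X -> X).
Hypothesis hT : C0_semigroup T.

Lemma semigroup_bounded_linear t : 0 <= t -> bounded_linear (T t).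
Proof. by case: hT => + _; apply. Qed.

Lemma semigroup0 x : T 0 x = x.
Proof. by case: hT => _ []. Qed.

Lemma semigroupD s t x : 0 <= s -> 0 <= t -> T (s + t) x = T s (T t x).
Proof. by case: hT => _ [_ [+ _]]; apply. Qed.

Lemma semigroup_orbit_continuous x : {within @Rge0 R, continuous (T^~ x)}.
Proof. by case: hT => _ [_ [_]]. Qed.

Lemma semigroup_primitive_shift w h t : 0 <= h -> 0 <= t ->
  T h (primitive (T^~ w) t) = primitive (T^~ w) (t + h) - primitive (T^~ w) h.
Proof.
move=> h0; apply: bounded_linear_primitive => //; try exact: semigroup_orbit_continuous.
  exact: semigroup_bounded_linear.
by move=> s s0; rewrite addrC semigroupD.
Qed.

Variables (D : set X) (A : X -> X).
Hypothesis hG : is_generator_of T D A.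

Lemma generator_cvg x l : (fun h : R => h^-1 *: (T h x - x)) @ 0^'+ --> l -> D x /\ A x = l.
Proof.
move=> xl; have Dx : D x by apply/(hG.1 x); exists l.
by split => //; apply: cvg_unique (hG.2 x Dx) xl.
Qed.

Lemma generator_linear a x z : D x -> D z ->
  D (a *: x + z) /\ A (a *: x + z) = a *: A x + A z.
Proof.
move=> Dx Dz; apply: generator_cvg.
have lin_cvg : (fun h : R => a *: (h^-1 *: (T h x - x)) + h^-1 *: (T h z - z)) @ 0^'+
    --> a *: A x + A z by apply: cvgD; [apply: cvgZr; exact: hG.2 | exact: hG.2].
apply: cvg_trans lin_cvg; apply: near_eq_cvg; near=> h.
have h0 : 0 < h by near: h; exact: nbhs_right_gt.
have Th := semigroup_bounded_linear (ltW h0).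
rewrite /= (bounded_linearD Th) (bounded_linearZ Th) opprD addrACA -scalerBr.
by rewrite [in RHS]scalerDr !scalerA mulrC.
Unshelve. all: by end_near.
Qed.

Lemma primitive_orbit_generator w t : 0 <= t ->
  D (primitive (T^~ w) t) /\ A (primitive (T^~ w) t) = T t w - w.
Proof.
move=> t0; apply: generator_cvg.
have wc := semigroup_orbit_continuous (x := w).
have quot_cvg : (fun h : R => h^-1 *: (primitive (T^~ w) (t + h) - primitive (T^~ w) t)
    - h^-1 *: (primitive (T^~ w) (0 + h) - primitive (T^~ w) 0)) @ 0^'+ --> T t w - w.
  have at0 := has_deriv_Rge0_right (lexx 0) (primitive_deriv wc (lexx 0)).
  rewrite semigroup0 in at0.
  exact: cvgB (has_deriv_Rge0_right t0 (primitive_deriv wc t0)) at0.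
apply: cvg_trans quot_cvg; apply: near_eq_cvg; near=> h.
have h0 : 0 < h by near: h; exact: nbhs_right_gt.
rewrite /= (semigroup_primitive_shift _ (ltW h0) t0) primitive0 subr0 add0r.
by rewrite -scalerBr addrAC.
Unshelve. all: by end_near.
Qed.

Lemma generator_domain0 : D 0.
Proof. by have [] := primitive_orbit_generator 0 (lexx 0); rewrite primitive0. Qed.

End Semigroup.

Section ConstantInputTrajectory.
Variables (R : realType) (U X Y : completeNormedModType R) (T : R -> X -> X)
  (D : set X) (A : X -> X) (B : U -> X) (C : X -> Y).
Hypotheses (hT : C0_semigroup T) (hG : is_generator_of T D A).

Lemma graph_bounded_continuous (x : R -> X) : graph_bounded D A C ->
  (forall t, 0 <= t -> D (x t)) -> {within @Rge0 R, continuous x} ->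
  {within @Rge0 R, continuous (fun t => A (x t))} ->
  {within @Rge0 R, continuous (fun t => C (x t))}.
Proof.
move=> [Clin [M CM]] Dx xc Axc; apply/continuous_Rge0P => t t0 e e0.
have M0 : 0 < `|M| + 1 by rewrite ltr_wpDl.
set eps := e / (2 * (`|M| + 1)).
have eps0 : 0 < eps by rewrite divr_gt0 ?mulr_gt0.
have [r1 r10 xr] := (continuous_Rge0P _).1 xc t t0 _ eps0.
have [r2 r20 Axr] := (continuous_Rge0P _).1 Axc t t0 _ eps0.
exists (Num.min r1 r2) => [|s s0]; first by rewrite lt_min r10.
rewrite lt_min => /andP[sr1 sr2].
have [Dst Ast] := generator_linear hT hG (-1) (Dx t t0) (Dx s s0).
have Cst := Clin (-1) (x t) (x s) (Dx t t0) (Dx s s0).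
rewrite !scaleN1r in Dst Ast Cst.
rewrite [C (x s) - _]addrC -Cst; apply: le_trans (CM _ Dst) _.
rewrite Ast ![- _ + _]addrC.
set S := `|x s - x t| + `|A (x s) - A (x t)|.
have S_le : S <= 2 * eps by have := xr s s0 sr1; have := Axr s s0 sr2; rewrite /S; lra.
have M_le : M <= `|M| + 1 by rewrite (le_trans (ler_norm M)) // lerDl.
have eps_eq : (`|M| + 1) * (2 * eps) = e by rewrite /eps; field; rewrite gt_eqF.
rewrite -eps_eq; apply: le_trans (ler_wpM2r _ M_le) (ler_wpM2l (ltW M0) S_le).
by rewrite /S addr_ge0.
Qed.

Definition constant_input_state (x0 : X) (u0 : U) (t : R) : X :=
  x0 + primitive (T^~ (A x0 + B u0)) t.

Lemma constant_input_state0 x0 u0 : constant_input_state x0 u0 0 = x0.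
Proof. by rewrite /constant_input_state primitive0 addr0. Qed.

Variables (x0 : X) (u0 : U).
Hypothesis Dx0 : D x0.
Local Notation w := (A x0 + B u0).
Local Notation x := (constant_input_state x0 u0).

Lemma constant_input_state_deriv t : 0 <= t -> has_deriv_Rge0 x t (T t w).
Proof.
move=> t0; have := primitive_deriv (semigroup_orbit_continuous hT (x := w)) t0.
apply: cvg_trans; apply: near_eq_cvg; near=> h.
by rewrite /constant_input_state opprD addrACA subrr add0r.
Unshelve. all: by end_near.
Qed.

Lemma constant_input_state_generator t : 0 <= t -> D (x t) /\ A (x t) = T t w - B u0.
Proof.
move=> t0; have [DP AP] := primitive_orbit_generator hT hG w t0.
have [Dx Ax] := generator_linear hT hG 1 Dx0 DP.
rewrite !scale1r in Dx Ax; split => //.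
by rewrite /constant_input_state Ax AP addrCA opprD addNKr.
Qed.

Lemma constant_input_trajectory : graph_bounded D A C ->
  Sys D A B C (fun _ => u0, x, fun t => C (x t)).
Proof.
move=> hC.
have xD t (t0 : 0 <= t) := (constant_input_state_generator t0).1.
have Ax t (t0 : 0 <= t) := (constant_input_state_generator t0).2.
have xc := has_deriv_Rge0_continuous (fun t t0 => constant_input_state_deriv t0).
have Axc : {within @Rge0 R, continuous (fun t => A (x t))}.
  apply/continuous_Rge0P => t t0 e e0.
  have [r r0 wr] := (continuous_Rge0P _).1 (semigroup_orbit_continuous hT (x := w)) t t0 e e0.
  by exists r => // s s0 st; rewrite !Ax // [T t w - _]addrC addrKA; apply: wr.
rewrite /Sys /=; split; first exact: cst_continuous.
split; first exact: xD.
split; first exact: xc.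
split; first exact: Axc.
split.
  exists (fun t => T t w); split; first split.
  - exact: constant_input_state_deriv.
  - exact: semigroup_orbit_continuous.
  - by move=> t t0; rewrite Ax // subrK.
by split; first exact: graph_bounded_continuous.
Qed.

End ConstantInputTrajectory.

Lemma Sys_subset_agree (R : realType) (U X Y : completeNormedModType R)
    (D : set X) (A : X -> X) (B : U -> X) (C : X -> Y)
    (D' : set X) (A' : X -> X) (B' : U -> X) (C' : X -> Y) :
  generates_C0 D A -> graph_bounded D A C -> Sys D A B C `<=` Sys D' A' B' C' ->
  forall x0 u0, D x0 -> [/\ D' x0, A x0 + B u0 = A' x0 + B' u0 & C x0 = C' x0].
Proof.
move=> [T [hT hG]] hC sub x0 u0 Dx0.
have [_ [D'x [_ [_ [[dx [[dxd _] dxE]] [_ yC]]]]]] :=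
  sub _ (constant_input_trajectory B hT hG u0 Dx0 hC).
split.
- by have := D'x 0 (lexx 0); rewrite constant_input_state0.
- have := has_deriv_Rge0_unique (lexx 0) (constant_input_state_deriv hT (lexx 0))
    (dxd 0 (lexx 0)).
  by rewrite (semigroup0 hT) dxE // constant_input_state0.
- by have := yC 0 (lexx 0); rewrite constant_input_state0.
Qed.

Unset Implicit Arguments.

Theorem proposition2p4 (R : realType) (U X Y : completeNormedModType R)
    (S : relation U X Y)
    (D : set X) (A : X -> X) (B : U -> X) (C : X -> Y)
    (D' : set X) (A' : X -> X) (B' : U -> X) (C' : X -> Y) :
  generates_C0 D A -> bounded_linear B -> graph_bounded D A C ->
  generates_C0 D' A' -> bounded_linear B' -> graph_bounded D' A' C' ->
  S = Sys D A B C -> S = Sys D' A' B' C' ->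
  D = D' /\ (forall x, D x -> A x = A' x) /\ B = B' /\
  (forall x, D x -> C x = C' x).
Proof.
move=> gA hB hC gA' hB' hC' -> /seteqP[sub sub'].
have data := Sys_subset_agree gA hC sub.
have data' := Sys_subset_agree gA' hC' sub'.
have AA' x : D x -> A x = A' x.
  move=> Dx; have [_ + _] := data x 0 Dx.
  by rewrite (bounded_linear0 hB) (bounded_linear0 hB') !addr0.
have D0 : D 0 by have [T [hT hG]] := gA; exact (generator_domain0 hT hG).
split; first by apply/seteqP; split => x Dx; [case: (data x 0 Dx) | case: (data' x 0 Dx)].
split => //; split; last by move=> x Dx; case: (data x 0 Dx).
apply/funext => u; have [_ + _] := data 0 u D0.
by rewrite AA' // => /addrI.
Qed.
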